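(* Let $A$ be a finite-dimensional alternative algebra over a field of characteristic different from $2$ such that every linear endomorphism of $A$ is a quasiderivation, i.e. $QDer(A)=End(A)$. Then either $A$ is a field or $A$ has zero multiplication.
   Context: An algebra is alternative if $(x,x,y)=(x,y,y)=0$ identically, where $(x,y,z)=(xy)z-x(yz)$. A linear map $f:A\to A$ is a quasiderivation if there exists a linear map $Q:A\to A$ with $Q(xy)=f(x)y+xf(y)$ for all $x,y\in A$; $QDer(A)$ is the set of quasiderivations and $End(A)$ the set of all linear endomorphisms of $A$. *)

From HB Require Import structures.
From mathcomp Require Import all_boot all_order all_algebra.
Set Implicit Arguments. Unset Strict Implicit. Unset Printing Implicit Defensive.
Import GRing.Theory.
Local Open Scope ring_scope.

(* A (not necessarily associative or unital) finite-dimensional algebra over a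
   field F is modelled as a vectType F (finite-dimensional F-vector space)
   together with a bilinear product [mul]. *)

Definition bilinear_mul (F : fieldType) (A : vectType F) (mul : A -> A -> A) :=
  (forall (a : F) (x y z : A), mul (a *: x + y) z = a *: mul x z + mul y z) /\
  (forall (a : F) (x y z : A), mul z (a *: x + y) = a *: mul z x + mul z y).

Definition assoc_of (F : fieldType) (A : vectType F) (mul : A -> A -> A)
  (x y z : A) : A := mul (mul x y) z - mul x (mul y z).

Definition alternative (F : fieldType) (A : vectType F) (mul : A -> A -> A) :=
  forall x y : A, assoc_of mul x x y = 0 /\ assoc_of mul x y y = 0.

Definition quasiderivation (F : fieldType) (A : vectType F) (mul : A -> A -> A)
  (f : 'End(A)) :=
  exists Q : 'End(A), forall x y : A, Q (mul x y) = mul (f x) y + mul x (f y).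

Definition all_quasiderivations (F : fieldType) (A : vectType F)
  (mul : A -> A -> A) := forall f : 'End(A), quasiderivation mul f.

Definition is_field_alg (F : fieldType) (A : vectType F) (mul : A -> A -> A) :=
  exists e : A,
    [/\ e != 0,
        forall x, mul e x = x /\ mul x e = x,
        forall x y z, mul (mul x y) z = mul x (mul y z),
        forall x y, mul x y = mul y x
      & forall x, x != 0 -> exists y, mul x y = e].

Definition zero_mul (F : fieldType) (A : vectType F) (mul : A -> A -> A) :=
  forall x y : A, mul x y = 0.

From HB Require Import structures.
From mathcomp Require Import all_boot all_order all_algebra.
From Stdlib Require Import Classical.
Import GRing.Theory.
Set Implicit Arguments. Unset Strict Implicit.
Local Open Scope ring_scope.

(* The only consequence of QDer(A) = End(A) that we use comes from rank-one
   maps f = phi(.) u, with phi a coordinate functional: there is a linear Q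
   with Q(xy) = phi(x) uy + phi(y) xu.  Choosing phi to separate two
   independent vectors gives strong vanishing statements.
   - If dim A >= 2:  no left multiplication L_x (x <> 0) is injective; for
     otherwise x^2 lies on the line of x, a rescaling of x is an idempotent
     and then a left unit, and a left unit is impossible next to an
     independent vector.  Hence every square vanishes, and alternativity
     then kills every product xb (via x(xb) = 0 and (xb)b = 0).
   - If dim A <= 1:  A = F v and v^2 = l v; either l = 0 (zero product) or
     v / l is a unit element making A a copy of the field F. *)

Definition rank_one (F : fieldType) (A : vectType F) n (X : n.-tuple A)
  (i : 'I_n) (u : A) (z : A) : A := coord X i z *: u.

Fact rank_one_is_linear (F : fieldType) (A : vectType F) n (X : n.-tuple A)
  (i : 'I_n) (u : A) : linear (rank_one X i u).
Proof. by move=> a z w; rewrite /rank_one linearP scalerDl scalerA. Qed.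

HB.instance Definition _ (F : fieldType) (A : vectType F) n (X : n.-tuple A)
  (i : 'I_n) (u : A) :=
  GRing.isLinear.Build F A A *:%R (rank_one X i u) (rank_one_is_linear X i u).

Section LinearAlgebra.
Variables (F : fieldType) (A : vectType F).

Lemma free_pair (y x : A) : free [:: y; x] = (y \notin <[x]>%VS) && (x != 0).
Proof. by rewrite free_cons span_seq1 seq1_free. Qed.

Lemma free_pair_neq0 (y x : A) : free [:: y; x] -> y != 0 /\ x != 0.
Proof.
rewrite free_pair => /andP[yNx x0]; split => //.
by apply: contraNneq yNx => ->; rewrite mem0v.
Qed.

Lemma free_or_collinear (y x : A) :
  x != 0 -> free [:: y; x] \/ exists k, y = k *: x.
Proof.
move=> x0; case: (boolP (y \in <[x]>%VS)) => [/vlineP|yNx]; first by right.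
by left; rewrite free_pair yNx x0.
Qed.

Lemma exists_free_partner (a b x : A) :
  free [:: a; b] -> x != 0 -> exists y, free [:: y; x].
Proof.
move=> fab x0; have [_ b0] := free_pair_neq0 fab.
case: (free_or_collinear a x0) => [|[k aE]]; first by exists a.
case: (free_or_collinear b x0) => [|[m bE]]; first by exists b.
have m0 : m != 0 by apply: contraNneq b0 => m0; rewrite bE m0 scale0r.
move: fab; rewrite free_pair => /andP[/vlineP[]]; exists (k / m).
by rewrite aE bE scalerA mulfVK.
Qed.

Lemma coord_pair (y x : A) : free [:: y; x] ->
  [/\ coord [tuple y; x] ord0 y = 1, coord [tuple y; x] ord0 x = 0,
      coord [tuple y; x] ord_max x = 1 & coord [tuple y; x] ord_max y = 0].
Proof.
move=> fr; have c := @coord_free _ _ 2 [tuple y; x] _ _ fr.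
by split; [exact: (c ord0 ord0) | exact: (c ord_max ord0)
          | exact: (c ord_max ord_max) | exact: (c ord0 ord_max)].
Qed.

Lemma double_eq0 (V : lmodType F) (v : V) : (2%:R : F) != 0 -> v + v = 0 -> v = 0.
Proof.
move=> two0 /eqP; rewrite -mulr2n -scaler_nat scaler_eq0 (negbTE two0).
by move/eqP.
Qed.

End LinearAlgebra.

Section Algebra.
Variables (F : fieldType) (A : vectType F) (mul : A -> A -> A).
Hypothesis mul_bil : bilinear_mul mul.

Lemma amulDl x y z : mul (x + y) z = mul x z + mul y z.
Proof. by have := proj1 mul_bil 1 x y z; rewrite !scale1r. Qed.

Lemma amulDr x y z : mul z (x + y) = mul z x + mul z y.
Proof. by have := proj2 mul_bil 1 x y z; rewrite !scale1r. Qed.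

Lemma amul0l z : mul 0 z = 0.
Proof. by apply: (addrI (mul 0 z)); rewrite -amulDl !addr0. Qed.

Lemma amul0r z : mul z 0 = 0.
Proof. by apply: (addrI (mul z 0)); rewrite -amulDr !addr0. Qed.

Lemma amulZl a x z : mul (a *: x) z = a *: mul x z.
Proof. by rewrite -[a *: x]addr0 (proj1 mul_bil) amul0l addr0. Qed.

Lemma amulZr a x z : mul z (a *: x) = a *: mul z x.
Proof. by rewrite -[a *: x]addr0 (proj2 mul_bil) amul0r addr0. Qed.

Lemma amulNl x z : mul (- x) z = - mul x z.
Proof. by rewrite -scaleN1r amulZl scaleN1r. Qed.

Lemma amulNr x z : mul z (- x) = - mul z x.
Proof. by rewrite -scaleN1r amulZr scaleN1r. Qed.

Definition lmul_injective (x : A) := forall w, mul x w = 0 -> w = 0.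

Hypothesis qder : all_quasiderivations mul.

Lemma quasider_rank_one n (X : n.-tuple A) (i : 'I_n) (u : A) :
  exists Q : 'End(A), forall x y,
    Q (mul x y) = coord X i x *: mul u y + coord X i y *: mul x u.
Proof.
have [Q QE] := qder (linfun (rank_one X i u)).
by exists Q => x y; rewrite QE !lfunE /rank_one /= amulZl amulZr.
Qed.

Lemma lmul0_of_free_product0 (x y : A) :
  free [:: y; x] -> mul x y = 0 -> forall a, mul x a = 0.
Proof.
move=> fr xy0 a; have [yy1 yx0 _ _] := coord_pair fr.
have [Q QE] := quasider_rank_one [tuple y; x] ord0 a.
by have := QE x y; rewrite xy0 linear0 yy1 yx0 scale0r add0r scale1r.
Qed.

Hypotheses (two_neq0 : (2%:R : F) != 0) (alt : alternative mul).

Lemma alt_left x y : mul (mul x x) y = mul x (mul x y).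
Proof. by case: (alt x y) => /eqP + _; rewrite subr_eq0 => /eqP. Qed.

Lemma alt_right x y : mul (mul x y) y = mul x (mul y y).
Proof. by case: (alt x y) => _ /eqP; rewrite subr_eq0 => /eqP. Qed.

(* An idempotent with injective left multiplication is a left unit:
   e(ez - z) = (ee)z - ez = 0. *)
Lemma left_unit_of_idempotent e :
  mul e e = e -> lmul_injective e -> forall z, mul e z = z.
Proof.
move=> ee inj z; apply/eqP; rewrite -subr_eq0; apply/eqP/inj.
by rewrite amulDr amulNr -alt_left ee subrr.
Qed.

(* A left unit e cannot coexist with a vector y independent of it: with phi
   the y-coordinate, quasiderivations force y^2 = 0, then ye = -y, and the
   right alternative law (ye)e = y(ee) gives y = -y. *)
Lemma no_left_unit (y e : A) :
  free [:: y; e] -> ~ (forall z, mul e z = z).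
Proof.
move=> fr unit; have [yy1 ye0 _ _] := coord_pair fr.
have [y0 _] := free_pair_neq0 fr.
have yy0 : mul y y = 0.
  have [Q QE] := quasider_rank_one [tuple y; e] ord0 y.
  have := QE e (mul y y); rewrite unit ye0 scale0r add0r unit QE yy1 scale1r.
  set c := coord _ _ (mul y y) => sqE.
  have c0 : c = 0.
    apply: (addrI c); rewrite addr0.
    by have := congr1 (coord [tuple y; e] ord0) sqE; rewrite linearD linearZ /= yy1 mulr1.
  by apply: double_eq0 two_neq0 _; rewrite sqE c0 scale0r.
have yeE : mul y e = - y.
  have [Q QE] := quasider_rank_one [tuple y; e] ord0 e.
  have := QE y y; rewrite yy0 linear0 yy1 !scale1r unit => /esym/eqP.
  by rewrite addrC addr_eq0 => /eqP.
have := alt_right y e; rewrite unit yeE amulNl yeE opprK => /eqP.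
by rewrite -subr_eq0 opprK => /eqP /(double_eq0 two_neq0) y0'; rewrite y0' eqxx in y0.
Qed.

(* Otherwise phi = the
   x-coordinate w.r.t. (x^2, x) gives 0 = Q(x^2 x^2) = Q(x(x x^2))
   = x(x x^2) + c x^2 with c = phi(x x^2); injectivity yields x x^2 = -c x,
   so c = -c = 0, x x^2 = 0 and finally x^2 = 0. *)
Lemma square_on_line x : x != 0 -> lmul_injective x -> mul x x \in <[x]>%VS.
Proof.
move=> x0 inj; apply: contraT => sqNx.
have fr : free [:: mul x x; x] by rewrite free_pair sqNx x0.
have [_ _ xx1 xsq0] := coord_pair fr.
have [Q QE] := quasider_rank_one [tuple mul x x; x] ord_max x.
set c := coord [tuple mul x x; x] ord_max (mul x (mul x x)).
have cubeE : mul x (mul x (mul x x) + c *: x) = 0.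
  have := QE (mul x x) (mul x x); rewrite xsq0 !scale0r addr0 alt_left QE xx1.
  by rewrite scale1r amulDr amulZr => ->.
have cube_line : mul x (mul x x) = - (c *: x).
  by apply/eqP; rewrite -subr_eq0 opprK; apply/eqP/inj.
have c0 : c = 0.
  apply: (double_eq0 (V := F^o) two_neq0).
  have := congr1 (coord [tuple mul x x; x] ord_max) cube_line.
  by rewrite linearN linearZ /= xx1 mulr1 -/c => {1}->; rewrite addNr.
move: cube_line; rewrite c0 scale0r oppr0 => /inj sq0.
by rewrite sq0 mem0v in sqNx.
Qed.

(* In dimension at least two no left multiplication by a nonzero vector is
   injective: otherwise x^2 = l x, e = x / l is an idempotent left unit. *)
Lemma lmul_not_injective (a b x : A) :
  free [:: a; b] -> x != 0 -> ~ lmul_injective x.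
Proof.
move=> fab x0 inj.
have xx0 : mul x x != 0 by apply: contra_neq x0 => /inj.
have /vlineP[l xxE] := square_on_line x0 inj.
have l0 : l != 0 by apply: contra_neq xx0 => l0; rewrite xxE l0 scale0r.
pose e := l^-1 *: x.
have ee : mul e e = e.
  by rewrite amulZl amulZr xxE !scalerA -mulrA mulVf // mulr1.
have inje : lmul_injective e.
  move=> w /eqP; rewrite amulZl scaler_eq0 invr_eq0 (negbTE l0) => /eqP.
  exact: inj.
have e0 : e != 0 by rewrite scaler_eq0 invr_eq0 negb_or l0.
have [y fr] := exists_free_partner fab e0.
exact: no_left_unit fr (left_unit_of_idempotent ee inje).
Qed.

Lemma square_zero (a b : A) : free [:: a; b] -> forall x, mul x x = 0.
Proof.
move=> fab x; have [->|x0] := eqVneq x 0; first exact: amul0l.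
have [//|sq0] := eqVneq (mul x x) 0; exfalso.
apply: (lmul_not_injective fab x0) => w xw0.
have [//|w0] := eqVneq w 0; exfalso.
case: (free_or_collinear w x0) => [fr|[k wE]].
  by move: sq0; rewrite (lmul0_of_free_product0 fr xw0) eqxx.
move/eqP: xw0; rewrite wE amulZr scaler_eq0 (negbTE sq0) orbF => /eqP k0.
by move: w0; rewrite wE k0 scale0r eqxx.
Qed.

(* In dimension at least two all products vanish: z = xb satisfies xz = 0
   and zb = 0 by alternativity, so z is either independent of x (and then
   L_x = 0) or a multiple l x, whence l z = zb = 0. *)
Lemma zero_product (a b : A) : free [:: a; b] -> zero_mul mul.
Proof.
move=> fab x y; have [//|z0] := eqVneq (mul x y) 0; exfalso.
have x0 : x != 0 by apply: contra_neq z0 => ->; exact: amul0l.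
have xz0 : mul x (mul x y) = 0 by rewrite -alt_left (square_zero fab) amul0l.
have zy0 : mul (mul x y) y = 0 by rewrite alt_right (square_zero fab) amul0r.
case: (free_or_collinear (mul x y) x0) => [fr|[l zE]].
  by move: z0; rewrite (lmul0_of_free_product0 fr xz0) eqxx.
move/eqP: zy0; rewrite {1}zE amulZl scaler_eq0 (negbTE z0) orbF => /eqP l0.
by move: z0; rewrite zE l0 scale0r eqxx.
Qed.

(* An algebra spanned by one nonzero vector v, with v^2 = l v, has zero
   product if l = 0 and is a copy of F with unit v / l otherwise. *)
Lemma line_algebra (v : A) : v != 0 -> (forall x, exists k, x = k *: v) ->
  is_field_alg mul \/ zero_mul mul.
Proof.
move=> v0 onv; have [l vvE] := onv (mul v v).
have [l0|l0] := eqVneq l 0.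
  right=> x y; have [a ->] := onv x; have [b ->] := onv y.
  by rewrite amulZl amulZr vvE l0 !scale0r !scaler0.
pose e := l^-1 *: v.
have ee : mul e e = e by rewrite amulZl amulZr vvE !scalerA -mulrA mulVf // mulr1.
have one : forall x, exists k, x = k *: e.
  move=> x; have [k ->] := onv x; exists (k * l).
  by rewrite /e scalerA mulfK.
have mulE a b : mul (a *: e) (b *: e) = (a * b) *: e.
  by rewrite amulZl amulZr ee scalerA.
left; exists e; split.
- by rewrite scaler_eq0 invr_eq0 negb_or l0.
- move=> x; have [k ->] := one x.
  by rewrite -{1 5}[e]scale1r !mulE mul1r mulr1.
- move=> x y z; have [a ->] := one x; have [b ->] := one y; have [c ->] := one z.
  by rewrite !mulE mulrA.
- by move=> x y; have [a ->] := one x; have [b ->] := one y; rewrite !mulE mulrC.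
- move=> x; have [k ->] := one x; rewrite scaler_eq0 negb_or => /andP[k0 _].
  by exists (k^-1 *: e); rewrite mulE mulfV // scale1r.
Qed.

End Algebra.

Theorem mainTheorem13 (F : fieldType) (A : vectType F) (mul : A -> A -> A) :
  (2%:R : F) != 0 ->
  bilinear_mul mul ->
  alternative mul ->
  all_quasiderivations mul ->
  is_field_alg mul \/ zero_mul mul.
Proof.
move=> two0 bil alt qd.
have [[a [b fab]]|no_pair] := classic (exists a b : A, free [:: a; b]).
  by right; exact: zero_product fab.
have [A0|v0] := eqVneq (vpick {:A}) 0.
  right=> x y; move/eqP: A0; rewrite vpick0 => /eqP A0.
  by have := memvf x; rewrite A0 memv0 => /eqP ->; exact: amul0l.
apply: (line_algebra bil v0) => x.
case: (free_or_collinear x v0) => // fr.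
by case: no_pair; exists x, (vpick {:A}).
Qed.
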